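(* Let $S\subset[m]$ with $\Lambda_S\neq\emptyset$. Then for every $v\in\Lambda_S$, $$\Lambda_S=\Delta_S\cap(v+K)=\{v+w\in\Delta_S: w\in K\}.$$ Consequently $\Lambda$ is contained in a finite union of translates of $K$.
   Context: $H=(V,E)$ is a finite hypergraph with $V=[m]$, $|E|=N\ge1$, hyperedges nonempty subsets of $[m]$, each vertex in at least one hyperedge. For $v\in\mathbb R^m$ and $I\in E$, $v_I=\sum_{i\in I}v_i$. $\Gamma=\{x\in\mathbb R^m:\sum_ix_i=0\}$; $I(H)$ is the $N\times m$ incidence matrix with entry $(I,i)$ equal to $1$ if $i\in I$, else $0$; $K=\ker(I(H)|_\Gamma)=\{w\in\Gamma: w_I=0\ \forall I\in E\}$. Fix $0<c<1/N$ and let $\Delta=\{x\in\mathbb R^m: x_i\ge0,\ \sum_i x_i=1,\ x_I\ge c\ \forall I\in E\}$. $L:\Delta\to\mathbb R$, $L(v)=-\sum_i v_i+\frac1N\sum_{I\in E}\log v_I$; $F_i(v)=v_i\frac{\partial L}{\partial v_i}(v)$ and $\Lambda=\{v\in\Delta:F(v)=0\}$. For $S\subset[m]$, the face $\Delta_S=\{v\in\Delta: v_i=0\iff i\notin S\}$, and $\Lambda_S=\{v\in\Delta_S:\frac{\partial L}{\partial v_i}(v)=0\ \forall i\in S\}$ (the $S$-singularities); $\Lambda=\bigcup_{S}\Lambda_S$. *)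

From HB Require Import structures.
From mathcomp Require Import all_boot all_order all_algebra.
From mathcomp Require Import all_classical all_reals all_analysis.
Set Implicit Arguments. Unset Strict Implicit. Unset Printing Implicit Defensive.
Import Order.TTheory GRing.Theory Num.Theory.
Local Open Scope ring_scope.

Section Defs.
Variables (R : realType) (m : nat) (E : {set {set 'I_m}}) (c : R).

Definition vsum (v : 'I_m -> R) (I : {set 'I_m}) : R := \sum_(i in I) v i.

Definition inGamma (x : 'I_m -> R) : Prop := \sum_i x i = 0.

(* K = ker (I(H) restricted to Gamma) *)
Definition inK (w : 'I_m -> R) : Prop :=
  inGamma w /\ forall I, I \in E -> vsum w I = 0.

Definition inDelta (x : 'I_m -> R) : Prop :=
  (forall i, 0 <= x i) /\ \sum_i x i = 1 /\ (forall I, I \in E -> c <= vsum x I).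

Definition inDeltaS (S : {set 'I_m}) (x : 'I_m -> R) : Prop :=
  inDelta x /\ forall i, x i = 0 <-> i \notin S.

Definition Lfun (v : 'I_m -> R) : R :=
  - \sum_i v i + (#|E|%:R)^-1 * \sum_(I in E) ln (vsum v I).

Definition dL (i : 'I_m) (v : 'I_m -> R) : R :=
  derive1 (fun t : R => Lfun (fun j => v j + t * (j == i)%:R)) 0.

Definition Ffun (v : 'I_m -> R) (i : 'I_m) : R := v i * dL i v.

Definition inLambda (v : 'I_m -> R) : Prop :=
  inDelta v /\ forall i, Ffun v i = 0.

Definition inLambdaS (S : {set 'I_m}) (v : 'I_m -> R) : Prop :=
  inDeltaS S v /\ forall i, i \in S -> dL i v = 0.

End Defs.

From Pilot Require Import Defs.
From HB Require Import structures.
From mathcomp Require Import all_boot all_order all_algebra.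
From mathcomp Require Import all_classical all_reals all_analysis.
From mathcomp Require Import ring.
Set Implicit Arguments.
Unset Strict Implicit.
Unset Printing Implicit Defensive.
Import Order.TTheory GRing.Theory Num.Theory.
Local Open Scope ring_scope.

(* Two points v, x of Λ_S vanish outside S and satisfy the stationarity
   equations Σ_{I∋i} 1/v_I = N = Σ_{I∋i} 1/x_I for i ∈ S.  Pairing x − v with
   the difference of these gradients and exchanging the sums yields
   Σ_I (x_I − v_I)(1/x_I − 1/v_I) = 0, a sum of nonpositive terms since t ↦ 1/t
   decreases; hence x_I = v_I on every hyperedge, i.e. x − v ∈ K.  Conversely
   the gradient of L depends on v only through the sums v_I, so a translate
   by K that stays in Δ_S is still in Λ_S.  Choosing one point in each
   nonempty Λ_S covers Λ by finitely many translates of K. *)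

Section Derivatives.
Variable R : realType.
Implicit Types f g : R -> R.

Lemma is_derive1_comp {f g} {x df dg : R} :
  is_derive x 1 f df -> is_derive (f x) 1 g dg -> is_derive x 1 (g \o f) (dg * df).
Proof.
move=> [fx <-] [gfx <-]; apply: DeriveDef; last by rewrite -!derive1E derive1_comp.
by apply/derivable1_diffP/differentiable_comp; apply/derivable1_diffP.
Qed.

Lemma is_derive_ln_affine (a b : R) : 0 < a ->
  is_derive (0 : R) 1 (fun t => ln (a + t * b)) (b / a).
Proof.
move=> a_gt0; rewrite mulrC.
have affine : is_derive (0 : R) 1 (fun t => a + t * b) b.
  have := is_deriveD (is_derive_cst a (0 : R) 1)
    (is_deriveM (is_derive_id (0 : R) 1) (is_derive_cst b (0 : R) 1)).
  by move/is_derive_eq; apply; rewrite scaler0 !add0r; exact: mulr1.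
have ln_a : is_derive (a + 0 * b) 1 (@ln R) (a + 0 * b)^-1.
  by apply: is_derive1_ln; rewrite mul0r addr0.
by have := is_derive1_comp affine ln_a; rewrite mul0r addr0.
Qed.

Lemma is_derive_big (V W : normedModType R) (T : Type) (r : seq T) (P : pred T)
    (h : T -> V -> W) (dh : T -> W) (x v : V) :
  (forall t, P t -> is_derive x v (h t) (dh t)) ->
  is_derive x v (fun y => \sum_(t <- r | P t) h t y) (\sum_(t <- r | P t) dh t).
Proof.
move=> dhP; rewrite -fct_sumE.
by elim/big_ind2: _ => [|? ? ? ? *|]; [exact: is_derive_cst|exact: is_deriveD|].
Qed.
End Derivatives.

Lemma sumr_delta (R : pzRingType) (T : finType) (P : pred T) (i : T) (t : R) :
  \sum_(j | P j) t * (j == i)%:R = t * (P i)%:R.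
Proof.
have [Pi|nPi] := boolP (P i).
  rewrite (bigD1 i) //= eqxx big1 ?addr0 // => j /andP[_ /negbTE->].
  by rewrite mulr0.
rewrite mulr0 big1 // => j Pj; case: eqP Pj => [->|_ _]; last by rewrite mulr0.
by rewrite (negbTE nPi).
Qed.

Lemma eq_of_sum_mulB_invB (R : realFieldType) (T : finType) (P : pred T) (a b : T -> R) :
  (forall t, P t -> 0 < a t) -> (forall t, P t -> 0 < b t) ->
  \sum_(t | P t) (a t - b t) * ((a t)^-1 - (b t)^-1) = 0 ->
  forall t, P t -> a t = b t.
Proof.
move=> a_gt0 b_gt0 sum0 t Pt.
have termE s : P s -> (a s - b s) * ((a s)^-1 - (b s)^-1) =
    - ((a s - b s) ^+ 2 / (a s * b s)).
  by move=> Ps; field; rewrite !gt_eqF ?a_gt0 ?b_gt0.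
have term_ge0 s : P s -> 0 <= (a s - b s) ^+ 2 / (a s * b s).
  by move=> Ps; rewrite divr_ge0 ?sqr_ge0 ?ltW ?mulr_gt0 ?a_gt0 ?b_gt0.
have : \sum_(s | P s) (a s - b s) ^+ 2 / (a s * b s) = 0.
  by apply/eqP; rewrite -oppr_eq0 -sumrN -(eq_bigr _ termE) sum0.
move=> /(psumr_eq0P term_ge0) /(_ t Pt) /eqP.
rewrite mulf_eq0 invr_eq0 (gt_eqF (mulr_gt0 (a_gt0 t Pt) (b_gt0 t Pt))) orbF.
by rewrite sqrf_eq0 subr_eq0 => /eqP.
Qed.

Section Singularities.
Variables (R : realType) (m : nat) (E : {set {set 'I_m}}) (c : R).
Local Notation N := (#|E|%:R : R).
Implicit Types (v w x : 'I_m -> R) (I S : {set 'I_m}).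

Lemma sum_vsum_mul (w : 'I_m -> R) (f : {set 'I_m} -> R) :
  \sum_(I in E) vsum w I * f I = \sum_i w i * \sum_(I in E | i \in I) f I.
Proof.
under eq_bigr => I _ do rewrite /vsum big_distrl big_mkcond /=.
rewrite exchange_big; apply: eq_bigr => i _.
rewrite big_distrr big_mkcondr /=; apply: eq_bigr => I _.
by case: (i \in I); rewrite ?mul0r ?mulr0.
Qed.

Lemma vsumD v w I : vsum (fun j => v j + w j) I = vsum v I + vsum w I.
Proof. exact: big_split. Qed.

Lemma vsumB v w I : vsum (fun j => v j - w j) I = vsum v I - vsum w I.
Proof. exact: sumrB. Qed.

Lemma vsum_delta i (t : R) I : vsum (fun j => t * (j == i)%:R) I = t * (i \in I)%:R.
Proof. exact: sumr_delta. Qed.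

Lemma dLE v i : (forall I, I \in E -> 0 < vsum v I) ->
  dL E i v = -1 + N^-1 * \sum_(I in E | i \in I) (vsum v I)^-1.
Proof.
move=> v_gt0.
(* MathComp-Analysis also defines an [Lfun] (L^p spaces), hence the qualified name. *)
have lineE : (fun t => Defs.Lfun E (fun j => v j + t * (j == i)%:R)) =
    cst (- \sum_j v j) - id
    + N^-1 \*: (fun t => \sum_(I in E) ln (vsum v I + t * (i \in I)%:R)).
  apply/funext => t; rewrite /Defs.Lfun big_split /= sumr_delta mulr1 opprD /=.
  by congr (_ + _ * _); apply: eq_bigr => I _; rewrite vsumD vsum_delta.
rewrite /dL lineE derive1E; apply: derive_val.
have dG : is_derive (0 : R) 1
    (fun t => \sum_(I in E) ln (vsum v I + t * (i \in I)%:R))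
    (\sum_(I in E) (i \in I)%:R / vsum v I).
  by apply: is_derive_big => I IE; apply: is_derive_ln_affine; apply: v_gt0.
have := is_deriveD (is_deriveB (is_derive_cst (- \sum_j v j) _ _) (is_derive_id _ _))
  (is_deriveZ N^-1 dG).
move/is_derive_eq; apply; rewrite sub0r; congr (_ + _ * _).
by rewrite big_mkcondr /=; apply: eq_bigr => I _; case: (i \in I); rewrite ?mul1r ?mul0r.
Qed.

Lemma dL_eq_vsum x v i : (forall I, I \in E -> 0 < vsum v I) ->
  (forall I, I \in E -> vsum x I = vsum v I) -> dL E i x = dL E i v.
Proof.
move=> v_gt0 xv; rewrite !dLE //; last by move=> I IE; rewrite xv ?v_gt0.
by congr (_ + _ * _); apply: eq_bigr => I /andP[IE _]; rewrite xv.
Qed.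

Lemma dL_eq0P v i : (0 < #|E|)%N -> (forall I, I \in E -> 0 < vsum v I) ->
  dL E i v = 0 <-> \sum_(I in E | i \in I) (vsum v I)^-1 = N.
Proof.
move=> E_gt0 v_gt0; have N_neq0 : N != 0 by rewrite pnatr_eq0 -lt0n.
rewrite dLE //; split=> [/eqP|->]; last by rewrite mulVf // addNr.
by rewrite addrC subr_eq0 => /eqP sN; rewrite -[LHS](mulVKf N_neq0) sN mulr1.
Qed.

Hypothesis c_gt0 : 0 < c.

Lemma vsum_gt0 v I : inDelta E c v -> I \in E -> 0 < vsum v I.
Proof. by move=> [_ [_ v_ge_c]] IE; apply: lt_le_trans c_gt0 (v_ge_c I IE). Qed.

Lemma lambdaS_vsum_eq S v x I :
  inLambdaS E c S v -> inLambdaS E c S x -> I \in E -> vsum x I = vsum v I.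
Proof.
move=> [[dv v0] dLv] [[dx x0] dLx] IE.
have E_gt0 : (0 < #|E|)%N by apply/card_gt0P; exists I.
pose g (y : 'I_m -> R) i := \sum_(I in E | i \in I) (vsum y I)^-1.
have g_eqN y i : inDelta E c y -> dL E i y = 0 -> g y i = N.
  by move=> dy /(dL_eq0P i E_gt0 (fun J => vsum_gt0 dy)).
have stationary i : (x i - v i) * (g x i - g v i) = 0.
  have [iS|iNS] := boolP (i \in S).
    by rewrite (g_eqN x) ?(g_eqN v) ?dLx ?dLv // subrr mulr0.
  by rewrite (x0 i).2 // (v0 i).2 // subrr mul0r.
apply: (@eq_of_sum_mulB_invB R _ (fun J => J \in E) (vsum x) (vsum v) _ _ _ I IE).
- by move=> J; apply: vsum_gt0.
- by move=> J; apply: vsum_gt0.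
have sum0 : \sum_i (x i - v i) * (g x i - g v i) = 0.
  by apply: big1 => i _; exact: stationary.
rewrite -[RHS]sum0; under eq_bigr do rewrite -vsumB.
by rewrite sum_vsum_mul; apply: eq_bigr => i _; rewrite /g sumrB.
Qed.

Lemma lambdaS_translate S v x : inLambdaS E c S v ->
  inLambdaS E c S x <->
  inDeltaS E c S x /\ exists w, inK E w /\ x = (fun j => v j + w j).
Proof.
move=> lv; split=> [lx|[dx [w [[_ w0] xE]]]]; last subst x.
  split; first exact: lx.1.
  exists (fun j => x j - v j); split; last by apply/funext => j; rewrite addrC subrK.
  split=> [|I IE]; last by rewrite vsumB (lambdaS_vsum_eq lv lx IE) subrr.
  by rewrite /inGamma sumrB lx.1.1.2.1 lv.1.1.2.1 subrr.
have same_vsum I : I \in E -> vsum (fun j => v j + w j) I = vsum v I.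
  by move=> IE; rewrite vsumD w0 ?addr0.
split=> // i iS; rewrite (dL_eq_vsum _ _ same_vsum) ?lv.2 // => I IE.
exact: vsum_gt0 lv.1.1 IE.
Qed.

Lemma lambdaS_support x : inLambda E c x -> inLambdaS E c [set i | x i != 0] x.
Proof.
move=> [dx Fx0]; split.
  by split=> // i; rewrite inE negbK; split=> [->|/eqP].
move=> i; rewrite inE => xi_neq0; apply/eqP.
by have /eqP := Fx0 i; rewrite /Ffun mulf_eq0 (negbTE xi_neq0).
Qed.
End Singularities.

Theorem lemma3p1 (R : realType) (m : nat) (E : {set {set 'I_m}}) (c : R) :
  (0 < #|E|)%N ->
  (forall I, I \in E -> I != finset.set0) ->
  (forall i : 'I_m, exists I, I \in E /\ i \in I) ->
  0 < c -> c < (#|E|%:R)^-1 ->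
  (forall S : {set 'I_m}, (exists v, inLambdaS E c S v) ->
     forall v, inLambdaS E c S v ->
     forall x, inLambdaS E c S x <->
               (inDeltaS E c S x /\ exists w, inK E w /\ x = (fun j => v j + w j)))
  /\
  (exists vS : {set 'I_m} -> ('I_m -> R),
     forall x, inLambda E c x ->
       exists S : {set 'I_m}, exists w, inK E w /\ x = (fun j => vS S j + w j)).
Proof.
move=> _ _ _ c_gt0 _; split=> [S _ v lv x|]; first exact: lambdaS_translate.
exists (fun S => xget (fun _ => 0) (inLambdaS E c S)) => x lx.
have lSx := lambdaS_support lx.
have lSv := xgetI (fun _ => 0) lSx.
have [_ [w [wK ->]]] := (lambdaS_translate c_gt0 x lSv).1 lSx.
by exists [set i | x i != 0], w.
Qed.
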